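(* For $R\in\mathbb{R}_+$, let $p,p'\in\mathbb{R}^2$ satisfy $\|p-p'\|\le R$. Then the area $A$ of $B_R(p')\cap B_R^c(p)$ satisfies $A\le\frac{2\sqrt3+3}{3}R\,\|p-p'\|$.
   Context: $B_R(p)$ is the closed Euclidean ball in $\mathbb{R}^2$ of radius $R$ centered at $p$, and $B_R^c(p)$ its complement; area means Lebesgue measure. *)

From mathcomp Require Import all_boot all_order all_algebra.
From mathcomp Require Import all_classical all_reals all_analysis.
Set Implicit Arguments. Unset Strict Implicit. Unset Printing Implicit Defensive.
Import Order.TTheory GRing.Theory Num.Theory.
Local Open Scope classical_set_scope.
Local Open Scope ring_scope.

Definition euclid_dist {R : realType} (p q : R * R) : R :=
  Num.sqrt ((p.1 - q.1) ^+ 2 + (p.2 - q.2) ^+ 2).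

Definition cball2 {R : realType} (p : R * R) (r : R) : set (R * R) :=
  [set q | euclid_dist p q <= r].

Definition area {R : realType} : set (R * R) -> \bar R :=
  ((@lebesgue_measure R) \x (@lebesgue_measure R))%E.

From mathcomp Require Import all_boot all_order all_algebra.
From mathcomp Require Import all_classical all_reals all_analysis.
From mathcomp Require Import ring lra measurable_realfun.
Import Order.TTheory GRing.Theory Num.Theory.
Local Open Scope classical_set_scope.
Local Open Scope ring_scope.

(* Write q - p = a v with v = (0, 1) or v = (1, k).  Along every line parallel
   to v, the chord cut from B_r(q) is the translate by a of the chord cut from
   B_r(p); both are intervals, so the lune B_r(q) \ B_r(p) meets the line in a
   set of diameter at most |a|.  Only the lines whose transversal coordinate
   (x, resp. y - k x) lies in an interval of length 2 r |v| meet B_r(q).  After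
   the area-preserving shear (x, y) |-> (x, y + k x), which makes these lines
   horizontal, Fubini bounds the area by 2 r |a| |v| = 2 r |p - q|.  This is at
   most the claimed bound because (2 sqrt 3 + 3) / 3 >= 2, and it holds without
   assuming |p - q| <= r. *)

Section plane_geometry.
Context {R : realType}.
Implicit Types (p q c o v w z : R * R) (r : R).

Definition line_at o v (t : R) : R * R := (o.1 + t * v.1, o.2 + t * v.2).

Lemma cball2E c r z : 0 <= r ->
  cball2 c r z = ((c.1 - z.1) ^+ 2 + (c.2 - z.2) ^+ 2 <= r ^+ 2 : Prop).
Proof.
move=> r0; rewrite /cball2 /euclid_dist /=.
by rewrite -[r in _ <= r]ger0_norm // -sqrtr_sqr ler_sqrt // sqr_ge0.
Qed.

Lemma measurable_cball2 c r : 0 <= r -> measurable (cball2 c r).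
Proof.
move=> r0.
have -> : cball2 c r =
    (fun z => (c.1 - z.1) ^+ 2 + (c.2 - z.2) ^+ 2) @^-1` `]-oo, r ^+ 2].
  by apply/seteqP; split => z; rewrite /= in_itv /= cball2E.
have mdist2 : measurable_fun setT (fun z => (c.1 - z.1) ^+ 2 + (c.2 - z.2) ^+ 2).
  by apply: measurable_funD; apply: measurable_funX; apply: measurable_funB.
by rewrite -[X in measurable X]setTI; apply: mdist2 => //; exact: measurable_itv.
Qed.

Lemma quadratic_sublevel_is_interval (A B C M : R) : 0 <= A ->
  is_interval [set t | A * t ^+ 2 + B * t + C <= M].
Proof.
move=> A0 u w /= hu hw z /andP[uz zw].
(* A convex parabola lies below its chords. *)
have chord : (w - u) * (A * z ^+ 2 + B * z + C - M) =
    (w - z) * (A * u ^+ 2 + B * u + C - M) + (z - u) * (A * w ^+ 2 + B * w + C - M)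
    - A * ((w - u) * (z - u) * (w - z)) by ring.
have [uw|uw] := eqVneq u w; first by have -> : z = u by rewrite -uw in zw; lra.
have wu : 0 < w - u by rewrite subr_gt0 lt_neqAle uw (le_trans uz zw).
have cubic_ge0 : 0 <= A * ((w - u) * (z - u) * (w - z)).
  by apply: mulr_ge0 => //; apply: mulr_ge0; [apply: mulr_ge0|]; lra.
rewrite -subr_le0 -(pmulr_rle0 _ wu) chord.
have : (w - z) * (A * u ^+ 2 + B * u + C - M) <= 0.
  by apply: mulr_ge0_le0; rewrite ?subr_ge0 ?subr_le0.
have : (z - u) * (A * w ^+ 2 + B * w + C - M) <= 0.
  by apply: mulr_ge0_le0; rewrite ?subr_ge0 ?subr_le0.
lra.
Qed.

Lemma cball2_line_is_interval c o v r : 0 <= r ->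
  is_interval [set t | cball2 c r (line_at o v t)].
Proof.
move=> r0.
pose A := v.1 ^+ 2 + v.2 ^+ 2.
pose B := -2 * ((c.1 - o.1) * v.1 + (c.2 - o.2) * v.2).
pose C := (c.1 - o.1) ^+ 2 + (c.2 - o.2) ^+ 2.
have dist2E t : (c.1 - (line_at o v t).1) ^+ 2 + (c.2 - (line_at o v t).2) ^+ 2 =
    A * t ^+ 2 + B * t + C by rewrite /A /B /C /=; ring.
have A_ge0 : 0 <= A by rewrite addr_ge0 ?sqr_ge0.
have iQ := quadratic_sublevel_is_interval A B C (r ^+ 2) A_ge0.
move=> u w /=; rewrite !cball2E // !dist2E => hu hw t ut.
by rewrite cball2E // dist2E; exact: (iQ u w).
Qed.

Lemma is_interval_shift_setD_diam (S : set R) (a t1 t2 : R) : is_interval S ->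
  S (t1 - a) -> ~ S t1 -> S (t2 - a) -> ~ S t2 -> t2 - t1 <= `|a|.
Proof.
move=> iS h1 n1 h2 n2; rewrite leNgt; apply/negP => lt12.
have [a0|a0] := leP 0 a.
- rewrite ger0_norm // in lt12.
  by apply: n1; apply: (iS _ _ h1 h2); apply/andP; split; lra.
- rewrite ltr0_norm // in lt12.
  by apply: n2; apply: (iS _ _ h1 h2); apply/andP; split; lra.
Qed.

Lemma lune_line_diam p q o v r (a t1 t2 : R) : 0 <= r ->
  q = (p.1 + a * v.1, p.2 + a * v.2) ->
  (cball2 q r `&` ~` cball2 p r) (line_at o v t1) ->
  (cball2 q r `&` ~` cball2 p r) (line_at o v t2) -> t2 - t1 <= `|a|.
Proof.
move=> r0 -> [h1 n1] [h2 n2].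
have shift t : cball2 (p.1 + a * v.1, p.2 + a * v.2) r (line_at o v t) =
    cball2 p r (line_at o v (t - a)).
  by rewrite /cball2 /euclid_dist /=; congr (Num.sqrt (_ ^+ 2 + _ ^+ 2) <= r); ring.
apply: (is_interval_shift_setD_diam _ _ _ _ (cball2_line_is_interval p o v r r0)) => /=;
  by [rewrite -shift | exact: n1 | exact: n2].
Qed.

Lemma cball2_dot_le q w z r : cball2 q r z ->
  `|w.1 * (z.1 - q.1) + w.2 * (z.2 - q.2)| <= r * Num.sqrt (w.1 ^+ 2 + w.2 ^+ 2).
Proof.
rewrite /cball2 /euclid_dist => hz.
apply: le_trans (ler_wpM2r (sqrtr_ge0 _) hz).
rewrite -sqrtrM ?addr_ge0 ?sqr_ge0 // -sqrtr_sqr; apply: ler_wsqrtr.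
(* Lagrange's identity *)
have := sqr_ge0 (w.2 * (z.1 - q.1) - w.1 * (z.2 - q.2)); nra.
Qed.

End plane_geometry.

Section area_bounds.
Context {R : realType}.
Local Notation mu := (@lebesgue_measure R).

Lemma lebesgue_measure_shift (t : R) (A : set R) : measurable A ->
  mu [set x | A (x + t)] = mu A.
Proof.
move=> mA.
have mf : measurable_fun [set: measurableTypeR R] (fun x : R => x + t).
  by apply: measurable_funD => //; exact: measurable_cst.
change (pushforward mu ((fun x => x + t) : _ -> measurableTypeR R) A = mu A).
apply/esym; apply: lebesgue_measure_unique => // _ [[a b]] _ <- /=.
rewrite /pushforward (_ : _ @^-1` _ = `]a - t, b - t]%classic); last first.
  by apply/seteqP; split => x /=; rewrite !in_itv /= => /andP[? ?];
    apply/andP; split; lra.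
rewrite !lebesgue_measure_itv /= !lte_fin ltrD2r -!EFinD.
by case: ifP => // _; congr (_%:E); ring.
Qed.

Lemma lebesgue_measure_le_diam (E : set R) (c : R) : measurable E -> 0 <= c ->
  (forall x y, E x -> E y -> y - x <= c) -> (mu E <= c%:E)%E.
Proof.
move=> mE c0 hE.
have [->|/set0P[e Ee]] := eqVneq E set0; first by rewrite measure0 lee_fin.
have lbE : has_lbound E by exists (e - c) => y Ey; have := hE y e Ey Ee; lra.
have sub : E `<=` `[inf E, inf E + c]%classic.
  move=> x Ex /=; rewrite in_itv /= ge_inf //=.
  suff : x - c <= inf E by lra.
  by apply: lb_le_inf; [exists e | move=> y Ey; have := hE y x Ey Ex; lra].
apply: (@le_trans _ _ (mu `[inf E, inf E + c]%classic)).
  by apply: le_measure => //; rewrite inE //; exact: measurable_itv.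
by rewrite lebesgue_measure_itv /= lte_fin; case: ifP => _; rewrite lee_fin //; lra.
Qed.

Lemma integral_sections_le (S : R -> set R) (c t0 L : R) : 0 <= c -> 0 <= L ->
  (forall t, measurable (S t)) -> measurable_fun setT (fun t => mu (S t)) ->
  (forall t u1 u2, S t u1 -> S t u2 -> u2 - u1 <= c) ->
  (forall t u, S t u -> `|t - t0| <= L) ->
  (\int[mu]_t mu (S t) <= (c * (2 * L))%:E)%E.
Proof.
move=> c0 L0 mS mfS hdiam hsupp.
pose I := `[t0 - L, t0 + L]%classic.
have mI : measurable I by exact: measurable_itv.
have -> : (\int[mu]_t mu (S t) = \int[mu]_(t in I) mu (S t))%E.
  rewrite [RHS]integral_mkcond; apply: eq_integral => t _; rewrite patchE.
  case: ifPn => // tI; suff -> : S t = set0 by rewrite measure0.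
  apply/seteqP; split => // u /hsupp; move: tI.
  by rewrite /I notin_setE /= in_itv /= ler_distl.
apply: (@le_trans _ _ (\int[mu]_(t in I) (cst c%:E) t)%E).
  apply: ge0_le_integral => //.
  - exact: measurable_funS measurableT (subsetT _) mfS.
  - by move=> t _; apply: lebesgue_measure_le_diam => //; exact: hdiam.
rewrite integral_cst //= lebesgue_measure_itv /= lte_fin.
case: ifPn => _; last by rewrite mule0 lee_fin !mulr_ge0.
by rewrite -EFinD -EFinM lee_fin; apply: ler_wpM2l => //; lra.
Qed.

Lemma area_le_xsections (B : set (R * R)) (c t0 L : R) : measurable B ->
  0 <= c -> 0 <= L ->
  (forall x y1 y2, B (x, y1) -> B (x, y2) -> y2 - y1 <= c) ->
  (forall x y, B (x, y) -> `|x - t0| <= L) ->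
  (area B <= (c * (2 * L))%:E)%E.
Proof.
move=> mB c0 L0 hdiam hsupp; apply: integral_sections_le => //.
- by move=> x; exact: measurable_xsection.
- exact: measurable_fun_xsection.
- by move=> x y1 y2; rewrite /xsection /= !inE; exact: hdiam.
- by move=> x y; rewrite /xsection /= inE; exact: hsupp.
Qed.

Lemma area_le_ysections (B : set (R * R)) (c t0 L : R) : measurable B ->
  0 <= c -> 0 <= L ->
  (forall y x1 x2, B (x1, y) -> B (x2, y) -> x2 - x1 <= c) ->
  (forall x y, B (x, y) -> `|y - t0| <= L) ->
  (area B <= (c * (2 * L))%:E)%E.
Proof.
move=> mB c0 L0 hdiam hsupp.
rewrite /area (product_measure_unique (m' := mu \x^ mu)%E) //;
  last exact: product_measure2E.
apply: integral_sections_le => //.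
- by move=> y; exact: measurable_ysection.
- exact: measurable_fun_ysection.
- by move=> y x1 x2; rewrite /ysection /= !inE; exact: hdiam.
- by move=> y x; rewrite /ysection /= inE; exact: hsupp.
Qed.

Definition shear (k : R) (z : R * R) : R * R := (z.1, z.2 + k * z.1).

Lemma measurable_shear (k : R) (A : set (R * R)) : measurable A ->
  measurable (shear k @^-1` A).
Proof.
move=> mA; have mshear : measurable_fun setT (shear k).
  apply: measurable_fun_pair => //.
  by apply: measurable_funD => //; apply: measurable_funM => //; exact: measurable_cst.
by rewrite -[X in measurable X]setTI; exact: mshear.
Qed.

Lemma area_shear (k : R) (A : set (R * R)) : measurable A ->
  area (shear k @^-1` A) = area A.
Proof.
move=> mA; apply: eq_integral => x _ /=.
by rewrite -(lebesgue_measure_shift (k * x) _ (measurable_xsection x mA)).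
Qed.

End area_bounds.

Section lune.
Context {R : realType}.
Implicit Types (p q : R * R) (r : R).

Lemma measurable_lune p q r : 0 <= r -> measurable (cball2 q r `&` ~` cball2 p r).
Proof.
by move=> r0; apply: measurableI; [|apply: measurableC]; exact: measurable_cball2.
Qed.

Lemma area_lune_le_vertical p q r : 0 <= r -> q.1 = p.1 ->
  (area (cball2 q r `&` ~` cball2 p r) <= (2 * r * euclid_dist p q)%:E)%E.
Proof.
move=> r0 q1E.
have -> : euclid_dist p q = `|q.2 - p.2|.
  by rewrite /euclid_dist q1E subrr expr0n add0r sqrtr_sqr distrC.
rewrite mulrC.
apply: (area_le_xsections _ _ p.1 _ (measurable_lune p q r r0)
  (normr_ge0 (q.2 - p.2)) r0).
- move=> x y1 y2.
  have vertical y : (x, y) = line_at (x, 0) (0, 1) y.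
    by rewrite /line_at /= mulr0 addr0 add0r mulr1.
  rewrite (vertical y1) (vertical y2); apply: lune_line_diam r0 _.
  by rewrite [LHS]surjective_pairing q1E /= mulr0 addr0 mulr1 addrC subrK.
- move=> x y [/(cball2_dot_le q (1, 0)) + _] /=.
  by rewrite mul1r mul0r addr0 expr1n expr0n addr0 sqrtr1 mulr1 q1E.
Qed.

Lemma area_lune_le_oblique p q r (a k : R) : 0 <= r -> q = (p.1 + a, p.2 + a * k) ->
  (area (cball2 q r `&` ~` cball2 p r) <= (2 * r * euclid_dist p q)%:E)%E.
Proof.
move=> r0 qE.
have -> : euclid_dist p q = `|a| * Num.sqrt (1 + k ^+ 2).
  rewrite /euclid_dist qE /= -sqrtr_sqr -sqrtrM ?sqr_ge0 //.
  by congr Num.sqrt; ring.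
rewrite -(area_shear k _ (measurable_lune p q r r0)).
rewrite (_ : 2 * r * _ = `|a| * (2 * (r * Num.sqrt (1 + k ^+ 2)))); last by ring.
apply: (area_le_ysections _ _ (p.2 - k * p.1) _
  (measurable_shear k _ (measurable_lune p q r r0)) (normr_ge0 a)
  (mulr_ge0 r0 (sqrtr_ge0 _))).
- move=> y x1 x2 /=.
  have oblique x : (x, y + k * x) = line_at (0, y) (1, k) x.
    by rewrite /line_at /=; congr pair; ring.
  rewrite /shear /= (oblique x1) (oblique x2); apply: lune_line_diam r0 _.
  by rewrite qE mulr1.
- move=> x y [/(cball2_dot_le q (- k, 1)) + _] /=.
  rewrite qE /= (_ : (- k) ^+ 2 + 1 ^+ 2 = 1 + k ^+ 2); last by ring.
  by congr (`|_| <= _); ring.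
Qed.

Lemma area_lune_le p q r : 0 <= r ->
  (area (cball2 q r `&` ~` cball2 p r) <= (2 * r * euclid_dist p q)%:E)%E.
Proof.
move=> r0; have [q1E|q1_neq] := eqVneq q.1 p.1; first exact: area_lune_le_vertical.
apply: (area_lune_le_oblique p q r (q.1 - p.1) ((q.2 - p.2) / (q.1 - p.1)) r0).
rewrite [LHS]surjective_pairing; congr pair; first by rewrite addrC subrK.
by rewrite mulrC divfK ?subr_eq0 // addrC subrK.
Qed.

End lune.

Theorem lemmaB1 (R : realType) (r : R) (p p' : R * R) :
  0 < r -> euclid_dist p p' <= r ->
  (area (cball2 p' r `&` ~` cball2 p r) <=
   (((2 * Num.sqrt 3 + 3) / 3) * r * euclid_dist p p')%:E)%E.
Proof.
move=> r0 _; apply: (le_trans (area_lune_le p p' r (ltW r0))).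
rewrite lee_fin; apply: ler_wpM2r; first exact: sqrtr_ge0.
apply: ler_wpM2r; first exact: ltW.
have sqrt3_ge0 : 0 <= Num.sqrt (3 : R) by exact: sqrtr_ge0.
have sqrt3_sq : Num.sqrt (3 : R) ^+ 2 = 3 by rewrite sqr_sqrtr.
have : 3 / 2 <= Num.sqrt (3 : R) by nra.
lra.
Qed.
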